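(* Let $k\ge 1$, $d = 2^k$, and suppose $d-1$ is a prime number. Let $\Omega$ be a set with $d$ elements, $S_d=\mathrm{Aut}(\Omega)$, and let $G \subset S_d$ be a primitive solvable subgroup. Then every element $g \in G$ with $g \neq 1_G$ has at most $2$ fixed points on $\Omega$.
   Context: A subgroup $G \subset \mathrm{Aut}(\Omega)$ is primitive if it is transitive and the stabilizer $G_x$ of a point $x\in\Omega$ is a maximal subgroup of $G$. *)

From mathcomp Require Import all_boot all_fingroup all_solvable.
Set Implicit Arguments. Unset Strict Implicit. Unset Printing Implicit Defensive.
Local Open Scope group_scope.

Definition primitive_perm_group (Omega : finType) (G : {group {perm Omega}}) :=
  [transitive G, on [set: Omega] | 'P] /\
  (forall x : Omega, maximal 'C_G[x | 'P] G).

(* A minimal normal subgroup N of the primitive solvable group G is abelian and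
   regular on Omega, so for a point y the fixed points of g in G_y correspond
   to the centraliser 'C_N[g].  By minimality of N, a minimal normal subgroup M
   of G_y (an elementary abelian r-group) has no nontrivial fixed point on N;
   counting modulo r then gives r = #|N| - 1, and since #|N| - 1 = 2^k - 1 is
   prime M acts regularly on the #|N| - 1 nontrivial elements of N.  If g fixed
   two of them, v and w = v ^ m, then g would centralise m, hence M = <[m]>,
   hence all of N = 1 :|: v ^: M, and g = 1 since only the identity of G_y
   centralises the transitive group N. *)

From mathcomp Require Import all_boot all_fingroup all_solvable.

Set Implicit Arguments.
Unset Strict Implicit.
Unset Printing Implicit Defensive.

Import GroupScope.

Lemma minnormal_cent_trivial (gT : finGroupType) (G H N M : {group gT}) :
    minnormal N G -> abelian N -> H <*> N = G -> 'C_H(N) = 1 ->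
    M :!=: 1 -> M \subset H -> H \subset 'N(M) ->
  'C_N(M) = 1.
Proof.
move=> minN cNN defG tiHN ntM sMH nMH.
have /andP[_ nNG] := mingroupp minN.
have nCG : G \subset 'N('C_N(M)).
  have nNH : H \subset 'N(N) by rewrite (subset_trans _ nNG) // -defG joing_subl.
  rewrite -defG join_subG normsI ?norms_cent //=.
  by rewrite cents_norm // (subset_trans cNN) // centS // subsetIl.
have [// | ntC] := eqVneq 'C_N(M) 1.
have /mingroupP[_ minN'] := minN.
have defC : 'C_N(M) = N by apply: minN'; rewrite ?ntC ?subsetIl.
case/negP: ntM; rewrite -subG1 -tiHN subsetI sMH centsC -defC.
exact: subsetIr.
Qed.

Section FixedPointFreeAbelem.

Variables (gT : finGroupType) (H N : {group gT}).
Hypotheses (nNH : H \subset 'N(N)) (tiHN : 'C_H(N) = 1).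
Hypothesis prN : prime #|N|.-1.

Variables (r : nat) (M : {group gT}).
Hypotheses (pr_r : prime r) (abelM : r.-abelem M) (sMH : M \subset H).
Hypothesis tiNM : 'C_N(M) = 1.

Let nNM : M \subset 'N(N). Proof. exact: subset_trans nNH. Qed.
Let cardN1 : #|N^#| = #|N|.-1. Proof. by rewrite (cardsD1 1 N) group1. Qed.

Lemma fixfree_abelem_char : r = #|N|.-1.
Proof.
have /pgroup_fix_mod : [acts M, on N | 'J] by rewrite astabsJ.
move/(_ r (abelem_pgroup abelM)); rewrite afixJ tiNM cards1 => /eqP.
rewrite eqn_mod_dvd ?cardG_gt0 // subn1 => r_dv.
by apply/eqP; rewrite -(dvdn_prime2 pr_r prN).
Qed.

Lemma classJ_fixfree_abelem v : v \in N^# -> v ^: M = N^#.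
Proof.
case/setD1P=> ntv Nv.
have sCN : v ^: M \subset N^#.
  apply/subsetP=> _ /imsetP[m Mm ->].
  by rewrite !inE conjg_eq1 ntv memJ_norm ?(subsetP nNM).
have [b oC] : {b | #|v ^: M| = (r ^ b)%N}.
  apply: p_natP; rewrite -index_cent1.
  exact: pnat_dvd (dvdn_indexg _ _) (abelem_pgroup abelM).
apply/eqP; rewrite eqEcard sCN cardN1 -fixfree_abelem_char oC.
case: b oC => [|b] oC; last by rewrite expnS leq_pmulr ?expn_gt0 ?prime_gt0.
suff : v \in 'C_N(M) by rewrite tiNM inE (negPf ntv).
rewrite inE Nv; apply/centP=> m Mm; apply/commgP/conjg_fixP.
apply/set1P; rewrite -(card_orbit1 (oC : #|orbit 'J M v| = 1%N)).
exact: memJ_class.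
Qed.

Lemma cent_fixfree_abelem x v :
  v \in N^# -> x \in 'C[v] -> x \in 'C(M) -> x \in 'C(N).
Proof.
move=> N1v /cent1P/commute_sym/commgP/conjg_fixP vx cMx; apply/centP=> n Nn.
have [-> | ntn] := eqVneq n 1; first exact: commute1.
have /imsetP[m Mm ->] : n \in v ^: M by rewrite classJ_fixfree_abelem // !inE ntn.
apply/commute_sym/commgP/conjg_fixP.
by rewrite -conjgM -(centP cMx m Mm) conjgM vx.
Qed.

Lemma cent1_fixfree_abelem v : v \in N^# -> 'C_M[v] = 1.
Proof.
move=> N1v; apply/trivgP; rewrite -tiHN subsetI subIset ?sMH //=.
apply/subsetP=> c /setIP[Mc cvc]; apply: cent_fixfree_abelem N1v cvc _.
exact: subsetP (abelem_abelian abelM) c Mc.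
Qed.

Lemma conjg_inj_fixfree_abelem v : v \in N^# -> {in M &, injective (conjg v)}.
Proof.
move=> N1v m1 m2 Mm1 Mm2 eq_v12; apply/eqP; rewrite eq_mulgV1; apply/eqP/set1gP.
rewrite -(cent1_fixfree_abelem N1v) inE groupM ?groupV //=.
apply/cent1P/commute_sym/commgP/conjg_fixP.
by rewrite conjgM eq_v12 conjgK.
Qed.

Lemma card_fixfree_abelem : #|M| = #|N|.-1.
Proof.
have [v N1v] : exists v, v \in N^#.
  by apply/set0Pn; rewrite -card_gt0 cardN1 prime_gt0.
rewrite -(card_in_imset (conjg_inj_fixfree_abelem N1v)).
by rewrite -[conjg v @: M]/(v ^: M) classJ_fixfree_abelem.
Qed.

Lemma cent1_sub_pair_fixfree_abelem g v :
    g \in H -> g \in 'N(M) -> g != 1 -> v \in 'C_N[g]^# ->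
  'C_N[g] \subset [set 1; v].
Proof.
move=> Hg nMg ntg /setD1P[ntv /setIP[Nv cgv]].
have N1v : v \in N^# by rewrite !inE ntv.
apply/subsetP=> w /setIP[Nw cgw]; rewrite !inE; apply/norP=> -[ntw neq_wv].
have /imsetP[m Mm def_w] : w \in v ^: M.
  by rewrite classJ_fixfree_abelem // !inE ntw.
have ntm : m != 1 by apply: contraNneq neq_wv => m1; rewrite def_w m1 conjg1.
(* Both m ^ g and m conjugate v to w = w ^ g, and M is regular on N^#. *)
have fix_m : m ^ g = m.
  have /cent1P/commgP/conjg_fixP vg := cgv.
  have /cent1P/commgP/conjg_fixP wg := cgw.
  apply: (conjg_inj_fixfree_abelem N1v); rewrite ?memJ_norm //=.
  by rewrite [m ^ g]conjgE !conjgM -{1}vg conjgK -def_w wg.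
have defM : M :=: <[m]>.
  by apply: nt_gen_prime; rewrite ?card_fixfree_abelem // !inE ntm.
have cMg : g \in 'C(M).
  by rewrite defM cent_cycle; apply/cent1P/commute_sym/commgP/conjg_fixP.
case/negP: ntg; rewrite -in_set1 -set1gE -tiHN inE Hg.
by rewrite (cent_fixfree_abelem N1v) // cent1C.
Qed.

Lemma card_cent1_fixfree_abelem g :
  g \in H -> g \in 'N(M) -> g != 1 -> #|'C_N[g]| <= 2.
Proof.
move=> Hg nMg ntg; have [C1_0 | [v C1v]] := set_0Vmem 'C_N[g]^#.
  by rewrite (cardsD1 1) group1 C1_0 cards0.
have /subset_leq_card := cent1_sub_pair_fixfree_abelem Hg nMg ntg C1v.
by rewrite cards2 => /leq_trans->; rewrite ?ltnS ?leq_b1.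
Qed.

End FixedPointFreeAbelem.

Section TransitivePermGroups.

Variable Omega : finType.
Implicit Types (G H N : {group {perm Omega}}) (g h n : {perm Omega}) (y : Omega).

Lemma normal_astab1_trivial G N y :
    [transitive G, on [set: Omega] | 'P] -> G \subset 'N(N) ->
  N \subset 'C[y | 'P] -> N :=: 1.
Proof.
move=> trG nNG sNC; apply/trivgP/subsetP=> n Nn; rewrite inE.
apply/eqP/permP=> z; rewrite perm1.
have [a Ga ->] := atransP2 trG (in_setT y) (in_setT z).
have : n \in N :^ a by rewrite (normP (subsetP nNG a Ga)).
rewrite -(conjSg _ _ a) in sNC.
by move/(subsetP sNC); rewrite -astab1_act => /astab1P.
Qed.

Lemma astab1_centI_transitive N y :
  [transitive N, on [set: Omega] | 'P] -> 'C[y | 'P] :&: 'C(N) = 1.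
Proof.
move=> trN; apply/trivgP/subsetP=> h /setIP[/astab1P /= hy cNh]; rewrite inE.
apply/eqP/permP=> z; rewrite perm1.
have [n Nn ->] := atransP2 trN (in_setT y) (in_setT z).
by rewrite /aperm -permM -(centP cNh n Nn) permM (hy : h y = y).
Qed.

Lemma abelian_transitive_inj N y :
    abelian N -> [transitive N, on [set: Omega] | 'P] ->
  {in N &, injective (fun n => n y)}.
Proof.
move=> cNN trN n1 n2 Nn1 Nn2 eq_n12; apply/eqP; rewrite eq_mulgV1.
rewrite -in_set1 -set1gE -(astab1_centI_transitive y trN) inE.
rewrite [_ \in 'C(N)](subsetP cNN) ?andbT; last by rewrite groupM ?groupV.
by apply/astab1P; rewrite /= /aperm permM eq_n12 -permM mulgV perm1.
Qed.

Lemma card_abelian_transitive N :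
  abelian N -> [transitive N, on [set: Omega] | 'P] -> #|N| = #|Omega|.
Proof.
move=> cNN trN; have /imsetP[y _ _] := trN.
rewrite -(card_in_imset (abelian_transitive_inj (y := y) cNN trN)) -cardsT.
by rewrite -(atransP trN _ (in_setT y)).
Qed.

Lemma card_fix_cent1_abelian_transitive N g y :
    abelian N -> [transitive N, on [set: Omega] | 'P] ->
    g \in 'N(N) -> g y = y ->
  #|[set x | g x == x]| = #|'C_N[g]|.
Proof.
move=> cNN trN nNg gy; have injN := abelian_transitive_inj (y := y) cNN trN.
have gVy : g^-1 y = y by rewrite -{1}gy permK.
have fix_n n : n \in N -> (g (n y) == n y) = (n \in 'C_N[g]).
  move=> Nn; rewrite inE Nn -{1}gVy -!permM -conjgE.
  rewrite (inj_in_eq injN) ?memJ_norm //.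
  by apply/eqP/cent1P => [/conjg_fixP/commgP | /commgP/conjg_fixP].
have -> : [set x | g x == x] = (fun n => n y) @: 'C_N[g].
  apply/setP=> z; have [n Nn ->] := atransP2 trN (in_setT y) (in_setT z).
  rewrite inE /aperm fix_n //; apply/idP/imsetP=> [Cn | [m Cm /injN-> //]].
    by exists n.
  by case/setIP: Cm.
by rewrite (card_in_imset (sub_in2 (subsetP (subsetIl N _)) injN)).
Qed.

End TransitivePermGroups.

Section PrimitivePermGroup.

Variables (Omega : finType) (G : {group {perm Omega}}).
Hypothesis primG : primitive_perm_group G.

Lemma prim_joing_astab1 (N : {group {perm Omega}}) y :
  G \subset 'N(N) -> N \subset G -> N :!=: 1 -> 'C_G[y | 'P] <*> N = G.
Proof.
case: primG => trG /(_ y)/maxgroupP[_ maxH] nNG sNG ntN.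
apply/eqP; rewrite eqEproper join_subG subsetIl sNG /=.
apply: contra ntN => /maxH defJ.
apply/eqP/(normal_astab1_trivial (y := y) trG nNG).
apply: subset_trans (subsetIr G _).
by rewrite -defJ ?joing_subl ?joing_subr.
Qed.

Lemma prim_normal_transitive (N : {group {perm Omega}}) :
    G \subset 'N(N) -> N \subset G -> N :!=: 1 ->
  [transitive N, on [set: Omega] | 'P].
Proof.
move=> nNG sNG ntN; have [trG _] := primG; have /imsetP[y _ _] := trG.
have := prim_joing_astab1 y nNG sNG ntN.
rewrite norm_joinEl => [defG | ]; last exact: subset_trans (subsetIl G _) nNG.
apply/imsetP; exists y; rewrite ?in_setT //; apply/eqP.
rewrite eqEsubset subsetT andbT; apply/subsetP=> z _.
have [a Ga ->] := atransP2 trG (in_setT y) (in_setT z).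
rewrite -defG in Ga; case/imset2P: Ga => h n /setIP[_ /astab1P hy] Nn ->.
by rewrite actM hy mem_orbit.
Qed.

End PrimitivePermGroup.

Theorem proposition2p3 (k : nat) (Omega : finType) (G : {group {perm Omega}}) :
  (1 <= k)%N -> prime (2 ^ k).-1 -> #|Omega| = (2 ^ k)%N ->
  primitive_perm_group G -> solvable G ->
  forall g : {perm Omega}, g \in G -> g != 1%g ->
    (#|[set x : Omega | g x == x]| <= 2)%N.
Proof.
move=> _ prO cardO primG solG g Gg ntg.
have [-> | [y]] := set_0Vmem [set x | g x == x]; first by rewrite cards0.
rewrite inE => /eqP gy; pose H := 'C_G[y | 'P]%G.
have Hg : g \in H by rewrite inE Gg; apply/astab1P.
have ntG : G :!=: 1 by apply/trivgPn; exists g.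
have [N minN sNG] := minnormal_exists ntG (normG G).
have [nNG ntN /is_abelemP[p _ /abelem_abelian cNN]] :=
  minnormal_solvable minN sNG solG.
have trN := prim_normal_transitive primG nNG sNG ntN.
have nNH : H \subset 'N(N) := subset_trans (subsetIl G _) nNG.
have tiHN : 'C_H(N) = 1.
  by apply/trivgP; rewrite -(astab1_centI_transitive y trN) setSI ?subsetIr.
have prN : prime #|N|.-1 by rewrite (card_abelian_transitive cNN trN) cardO.
rewrite (card_fix_cent1_abelian_transitive cNN trN (subsetP nNG g Gg) gy).
have ntH : H :!=: 1 by apply/trivgPn; exists g.
have [M minM sMH] := minnormal_exists ntH (normG H).
have [nMH ntM /is_abelemP[r pr_r abelM]] :=
  minnormal_solvable minM sMH (solvableS (subsetIl G _) solG).
have defG := prim_joing_astab1 primG y nNG sNG ntN.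
have tiNM := minnormal_cent_trivial minN cNN defG tiHN ntM sMH nMH.
exact (card_cent1_fixfree_abelem nNH tiHN prN pr_r abelM sMH tiNM
         Hg (subsetP nMH g Hg) ntg).
Qed.
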